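(* Let $\nu$ be a partition of $n$ with at most $N$ parts and $T$ a standard tableau of shape $\nu$. Then the rational function $Z_\nu(u)=(\mathrm{tr}^{\otimes n}\otimes\mathrm{id})(F_T(u))$ takes values in $Z(\mathfrak g)$, the ring of invariants of $U(\mathfrak g)$ under the adjoint action of $G$.
   Context: $M=\lfloor N/2\rfloor$. Index set $I=\{-M,\dots,-1,1,\dots,M\}$ if $N=2M$, $I=\{-M,\dots,-1,0,1,\dots,M\}$ if $N=2M+1$; $e_i$ ($i\in I$) basis of $\mathbb C^N$, $E_{ij}$ matrix units ($E_{ij}e_k=\delta_{jk}e_i$). $G$ is either $O_N$ (the subgroup of $GL_N$ preserving $\langle e_i,e_j\rangle=\delta_{i,-j}$) or $Sp_N$, $N$ even (preserving $\langle e_i,e_j\rangle=\delta_{i,-j}\operatorname{sgn}i$), and $\mathfrak g\subset\mathfrak{gl}_N$ its Lie algebra. $\varepsilon_{ij}=\operatorname{sgn}i\operatorname{sgn}j$ for $Sp_N$, $1$ for $O_N$; $F_{ij}=E_{ij}-\varepsilon_{ij}E_{-j,-i}\in\mathfrak g$; $\eta=\frac12$ for $\mathfrak{so}_N$, $-\frac12$ for $\mathfrak{sp}_N$. $F(u)=-u-\eta+\sum_{i,j\in I}E_{ij}\otimes F_{ji}\in\mathrm{End}(\mathbb C^N)\otimes U(\mathfrak g)[u]$; $\iota_p(X)=1^{\otimes(p-1)}\otimes X\otimes 1^{\otimes(n-p)}$; $F_p(u)=(\iota_p\otimes\mathrm{id})F(u)$; $Q=\sum_{i,j}\varepsilon_{ij}E_{ij}\otimes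 E_{-i,-j}$, $Q_{pq}=(\iota_p\otimes\iota_q)(Q)$. For a standard tableau $T$ of shape $\nu$ (filling by $1,\dots,n$ increasing along rows and columns), $c_p=k-l$ if $p$ lies in column $k$ and row $l$. $W_\nu$ is the irreducible $S_n$-module labelled by $\nu$ with invariant inner product; $w_T$ is the unit Young basis vector associated to $T$ via the chain $S_1\subset\dots\subset S_n$ (the one-dimensional subspace $W_T$ lies, for each $p$, in an irreducible $S_p$-submodule of the type given by the shape of the entries $1,\dots,p$ of $T$). $\Phi_T=\frac{\dim W_\nu}{n!}\sum_{\sigma\in S_n}\langle w_T,\sigma w_T\rangle\sigma$, and $Y_T\in\mathrm{End}(\mathbb C^N)^{\otimes n}$ its image under permutation of tensor factors. $F_T(u)=(Y_T\otimes1)\prod_{p=1}^n\big(1+\frac{(Q_{1p}+\dots+Q_{p-1,p})\otimes1}{2u+c_p}\big)F_p(u+c_p)\in\mathrm{End}(\mathbb C^N)^{\otimes n}\otimes U(\mathfrak g)(u)$ with factors ordered left to right; $\mathrm{tr}$ is the matrix trace. *)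

From HB Require Import structures.
From mathcomp Require Import all_boot all_order all_algebra all_fingroup.
From mathcomp Require Import complex.
From mathcomp Require Import Rstruct.
Set Implicit Arguments. Unset Strict Implicit. Unset Printing Implicit Defensive.
Import Order.TTheory GRing.Theory Num.Theory.
Local Open Scope ring_scope.

Definition CC : Type := (Rdefinitions.R)[i].
HB.instance Definition _ := GRing.Field.on CC.

(* Index set I = {-M..-1,(0),1..M} encoded by 'I_N, in increasing order. *)
Definition ival (N : nat) (k : 'I_N) : int :=
  if odd N then k%:Z - (N./2)%:Z
  else if (k < N./2)%N then k%:Z - (N./2)%:Z else k%:Z - (N./2)%:Z + 1.
(* The index -i corresponds to rev_ord i. *)
Definition isg (N : nat) (k : 'I_N) : int := Num.sg (ival k).

Inductive gkind := Ortho | Sympl.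

Definition eps (kd : gkind) (N : nat) (i j : 'I_N) : CC :=
  match kd with Ortho => 1 | Sympl => (isg i * isg j)%:~R end.
Definition eta (kd : gkind) : CC :=
  match kd with Ortho => 2%:R^-1 | Sympl => - 2%:R^-1 end.

Definition Jform (kd : gkind) (N : nat) : 'M[CC]_N :=
  \matrix_(i, j) if rev_ord i == j then
                   (match kd with Ortho => 1 | Sympl => (isg i)%:~R end)
                 else 0.

Definition in_G (kd : gkind) (N : nat) (g : 'M[CC]_N) : bool :=
  (g \in unitmx) && (g^T *m Jform kd N *m g == Jform kd N).
Definition in_lie (kd : gkind) (N : nat) (X : 'M[CC]_N) : bool :=
  X^T *m Jform kd N + Jform kd N *m X == 0.

Definition Fmx (kd : gkind) (N : nat) (i j : 'I_N) : 'M[CC]_N :=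
  delta_mx i j - eps kd i j *: delta_mx (rev_ord j) (rev_ord i).

Definition Adj (N : nat) (g X : 'M[CC]_N) : 'M[CC]_N := g *m X *m invmx g.

(* rho : g -> A is a homomorphism of Lie algebras into the associative
   C-algebra A (values of rho outside g are irrelevant). *)
Definition is_lie_hom (kd : gkind) (N : nat) (A : algType CC)
    (rho : 'M[CC]_N -> A) : Prop :=
  (forall (a : CC) (X Y : 'M[CC]_N), in_lie kd X -> in_lie kd Y ->
      rho (a *: X + Y) = a *: rho X + rho Y) /\
  (forall X Y : 'M[CC]_N, in_lie kd X -> in_lie kd Y ->
      rho (X *m Y - Y *m X) = rho X * rho Y - rho Y * rho X).

(* End(C^N)^{\otimes n} (x) A, as (N^n x N^n)-matrices with entries in A,
   rows/columns indexed by multi-indices k : 'I_n -> 'I_N.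
   M a b is the coefficient of e_a (x) e_b^* . *)
Section Tensor.
Variables (A : algType CC) (N n : nat).

Definition tidx := {ffun 'I_n -> 'I_N}.
Definition tmx := tidx -> tidx -> A.

Definition tmul (M1 M2 : tmx) : tmx := fun a b => \sum_k M1 a k * M2 k b.
Definition tone : tmx := fun a b => (a == b)%:R.
Definition tadd (M1 M2 : tmx) : tmx := fun a b => M1 a b + M2 a b.
Definition tscale (c : CC) (M : tmx) : tmx := fun a b => c *: M a b.
Definition tsum (I : finType) (P : pred I) (F : I -> tmx) : tmx :=
  fun a b => \sum_(i | P i) F i a b.
Definition tprod (I : finType) (F : I -> tmx) : tmx :=
  \big[tmul/tone]_(i : I) F i.   (* ordered product, left to right *)

(* iota_p(X) : X acting on the p-th tensor factor *)
Definition tiota (p : 'I_n) (X : 'M[CC]_N) : tmx := fun a b =>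
  if [forall q, (q != p) ==> (a q == b q)] then X (a p) (b p) *: 1 else 0.

(* action of sigma in S_n by permutation of tensor factors:
   e_{b_1}(x)...(x)e_{b_n} |-> e_{b_{s^-1 1}}(x)...(x)e_{b_{s^-1 n}} *)
Definition tperm_op (s : 'S_n) : tmx := fun a b =>
  (a == [ffun k => b ((s^-1)%g k)])%:R.

Definition tQ (kd : gkind) (p q : 'I_n) : tmx :=
  tsum xpredT (fun ij : 'I_N * 'I_N =>
    tscale (eps kd ij.1 ij.2)
      (tmul (tiota p (delta_mx ij.1 ij.2))
            (tiota q (delta_mx (rev_ord ij.1) (rev_ord ij.2))))).

Definition tF (kd : gkind) (rho : 'M[CC]_N -> A) (u : CC) (p : 'I_n) : tmx :=
  tadd (tscale (- u - eta kd) tone)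
       (tsum xpredT (fun ij : 'I_N * 'I_N => fun a b =>
          tiota p (delta_mx ij.1 ij.2) a b * rho (Fmx kd ij.2 ij.1))).

(* Partitions and standard tableaux.  A tableau T : 'I_n -> nat * nat gives
   (row, column) (0-based) of each entry p (entry p+1 in 1-based terms). *)
Definition is_partition (nu : seq nat) : bool :=
  sorted geq nu && all (fun x => 0 < x)%N nu && (sumn nu == n).

Definition is_std_tableau (nu : seq nat) (T : 'I_n -> nat * nat) : Prop :=
  [/\ (forall p, ((T p).1 < size nu)%N /\ ((T p).2 < nth 0%N nu (T p).1)%N),
      injective T,
      (forall r c, (r < size nu)%N -> (c < nth 0%N nu r)%N -> exists p, T p = (r, c)),
      (forall p q, (T p).1 = (T q).1 -> ((T p).2 < (T q).2)%N -> (p < q)%N) &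
      (forall p q, (T p).2 = (T q).2 -> ((T p).1 < (T q).1)%N -> (p < q)%N)].

Definition content (T : 'I_n -> nat * nat) (p : 'I_n) : int :=
  (T p).2%:Z - (T p).1%:Z.

Definition tJM (p : 'I_n) : tmx :=
  tsum (fun q : 'I_n => (q < p)%N) (fun q => tperm_op (tperm q p)).

(* Y_T: image of the primitive idempotent Phi_T, written through the
   Jucys-Murphy elements:  Phi_T = prod_p prod_{a in [-p',p'], a <> c_p}
   (x_p - a)/(c_p - a), where p' = p (0-based) is the largest |content|
   possible for box p. *)
Definition YT (T : 'I_n -> nat * nat) : tmx :=
  tprod (fun p : 'I_n =>
    \big[tmul/tone]_(a <- [seq (i%:Z - p%:Z)%R | i <- iota 0 (p + p).+1]
                     | a != content T p)
       tscale ((content T p - a)%:~R^-1) (tadd (tJM p) (tscale (- a%:~R) tone))).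

Definition FT (kd : gkind) (rho : 'M[CC]_N -> A) (T : 'I_n -> nat * nat)
    (u : CC) : tmx :=
  tmul (YT T)
    (tprod (fun p : 'I_n =>
       tmul (tadd tone
               (tscale ((2%:R * u + (content T p)%:~R)^-1)
                  (tsum (fun q : 'I_n => (q < p)%N) (fun q => tQ kd q p))))
            (tF kd rho (u + (content T p)%:~R) p))).

Definition Zeval (kd : gkind) (rho : 'M[CC]_N -> A) (T : 'I_n -> nat * nat)
    (u : CC) : A :=
  \sum_a FT kd rho T u a a.

End Tensor.

From HB Require Import structures.
From mathcomp Require Import all_boot all_order all_algebra all_fingroup.
From mathcomp Require Import complex.
From mathcomp Require Import Rstruct.
From mathcomp Require Import zify ring.
From Stdlib Require Import FunctionalExtensionality.
Import GRing.Theory Num.Theory.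
Local Open Scope ring_scope.
Set Implicit Arguments. Unset Strict Implicit. Unset Printing Implicit Defensive.

(* Let G = g^{(x)n} act diagonally on the tensor space.  G commutes with every
   permutation of the tensor factors, hence with Y_T, and with every Q_pq because
   g preserves the form.  Since sum_ij E_ij (x) F_ji is invariant under
   Ad g (x) Ad g, conjugating the p-th factor of F_p(u) by g undoes the
   substitution rho -> rho o Ad g.  Hence F_T(u) built from rho o Ad g equals
   G^-1 F_T(u) G, and the traces agree. *)

Section TensorAlgebra.
Variables (A : algType CC) (N n : nat).
Local Notation tm := (tmx A N n).
Local Notation t1 := (@tone A N n).

Lemma tmx_ext (M1 M2 : tm) : (forall a b, M1 a b = M2 a b) -> M1 = M2.
Proof.
by move=> eqM; do 2![apply: functional_extensionality => ?]; apply: eqM.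
Qed.

Lemma tmulA (M1 M2 M3 : tm) : tmul M1 (tmul M2 M3) = tmul (tmul M1 M2) M3.
Proof.
apply: tmx_ext => a b; rewrite /tmul.
under [RHS]eq_bigr do rewrite mulr_suml.
rewrite exchange_big; apply: eq_bigr => k _; rewrite mulr_sumr.
by apply: eq_bigr => l _; rewrite mulrA.
Qed.

Lemma tmul1l (M : tm) : tmul t1 M = M.
Proof.
apply: tmx_ext => a b; rewrite /tmul /tone (bigD1 a) //= eqxx mul1r big1 ?addr0 //.
by move=> k /negbTE; rewrite eq_sym => ->; rewrite mul0r.
Qed.

Lemma tmul1r (M : tm) : tmul M t1 = M.
Proof.
apply: tmx_ext => a b; rewrite /tmul /tone (bigD1 b) //= eqxx mulr1 big1 ?addr0 //.
by move=> k /negbTE ->; rewrite mulr0.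
Qed.

Lemma tmulDl (M1 M2 M : tm) : tmul (tadd M1 M2) M = tadd (tmul M1 M) (tmul M2 M).
Proof.
apply: tmx_ext => a b; rewrite /tmul /tadd -big_split /=.
by apply: eq_bigr => k _; rewrite mulrDl.
Qed.

Lemma tmulDr (M M1 M2 : tm) : tmul M (tadd M1 M2) = tadd (tmul M M1) (tmul M M2).
Proof.
apply: tmx_ext => a b; rewrite /tmul /tadd -big_split /=.
by apply: eq_bigr => k _; rewrite mulrDr.
Qed.

Lemma tmulZl c (M1 M : tm) : tmul (tscale c M1) M = tscale c (tmul M1 M).
Proof.
apply: tmx_ext => a b; rewrite /tmul /tscale scaler_sumr.
by apply: eq_bigr => k _; rewrite scalerAl.
Qed.

Lemma tmulZr c (M M1 : tm) : tmul M (tscale c M1) = tscale c (tmul M M1).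
Proof.
apply: tmx_ext => a b; rewrite /tmul /tscale scaler_sumr.
by apply: eq_bigr => k _; rewrite scalerAr.
Qed.

Lemma tmul_suml (I : finType) (P : pred I) (F : I -> tm) (M : tm) :
  tmul (tsum P F) M = tsum P (fun i => tmul (F i) M).
Proof.
apply: tmx_ext => a b; rewrite /tmul /tsum.
under eq_bigr do rewrite mulr_suml.
by rewrite exchange_big.
Qed.

Lemma tmul_sumr (I : finType) (P : pred I) (F : I -> tm) (M : tm) :
  tmul M (tsum P F) = tsum P (fun i => tmul M (F i)).
Proof.
apply: tmx_ext => a b; rewrite /tmul /tsum.
under eq_bigr do rewrite mulr_sumr.
by rewrite exchange_big.
Qed.

Lemma tmul_mulr (M1 M : tm) (y : A) :
  tmul M1 (fun a b => M a b * y) = fun a b => tmul M1 M a b * y.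
Proof.
apply: tmx_ext => a b; rewrite /tmul mulr_suml.
by apply: eq_bigr => k _; rewrite mulrA.
Qed.

Definition intertwines (G M' M : tm) := tmul G M' = tmul M G.

Lemma intertwines1 G : intertwines G t1 t1.
Proof. by rewrite /intertwines tmul1l tmul1r. Qed.

Lemma intertwinesM G M1' M1 M2' M2 :
  intertwines G M1' M1 -> intertwines G M2' M2 ->
  intertwines G (tmul M1' M2') (tmul M1 M2).
Proof. by rewrite /intertwines => GM1 GM2; rewrite tmulA GM1 -tmulA GM2 tmulA. Qed.

Lemma intertwinesD G M1' M1 M2' M2 :
  intertwines G M1' M1 -> intertwines G M2' M2 ->
  intertwines G (tadd M1' M2') (tadd M1 M2).
Proof. by rewrite /intertwines tmulDl tmulDr => -> ->. Qed.

Lemma intertwinesZ G c M' M :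
  intertwines G M' M -> intertwines G (tscale c M') (tscale c M).
Proof. by rewrite /intertwines tmulZl tmulZr => ->. Qed.

Lemma intertwines_sum G (I : finType) (P : pred I) (F' F : I -> tm) :
  (forall i, P i -> intertwines G (F' i) (F i)) ->
  intertwines G (tsum P F') (tsum P F).
Proof.
move=> GF; rewrite /intertwines tmul_suml tmul_sumr.
by apply: tmx_ext => a b; apply: eq_bigr => i Pi; rewrite GF.
Qed.

Lemma intertwines_big G (I : Type) (r : seq I) (P : pred I) (F' F : I -> tm) :
  (forall i, P i -> intertwines G (F' i) (F i)) ->
  intertwines G (\big[@tmul A N n/t1]_(i <- r | P i) F' i)
                (\big[@tmul A N n/t1]_(i <- r | P i) F i).
Proof.
move=> GF; apply: (big_ind2 (intertwines G)) => //; first exact: intertwines1.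
by move=> *; apply: intertwinesM.
Qed.

Definition ttensor (H : 'I_n -> 'M[CC]_N) : tm :=
  fun a b => (\prod_q H q (a q) (b q)) *: 1.

Lemma ttensorM (H1 H2 : 'I_n -> 'M[CC]_N) :
  tmul (ttensor H1) (ttensor H2) = ttensor (fun q => H1 q *m H2 q).
Proof.
apply: tmx_ext => a b; rewrite /tmul /ttensor /=.
under eq_bigr do rewrite -scalerAl mul1r scalerA.
rewrite -scaler_suml; congr (_ *: _).
under [RHS]eq_bigr do rewrite mxE.
rewrite bigA_distr_bigA /=.
by apply: eq_bigr => k _; rewrite -big_split.
Qed.

Lemma tmul_mulr_ttensor (H : 'I_n -> 'M[CC]_N) (M : tm) (y : A) :
  tmul (fun a b => M a b * y) (ttensor H) = fun a b => tmul M (ttensor H) a b * y.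
Proof.
apply: tmx_ext => a b; rewrite /tmul /ttensor mulr_suml.
apply: eq_bigr => k _; rewrite -!mulrA; congr (_ * _).
by rewrite -scalerAl -scalerAr mul1r mulr1.
Qed.

Lemma ttensor1 : ttensor (fun _ => 1%:M) = t1.
Proof.
apply: tmx_ext => a b; rewrite /ttensor /tone.
under eq_bigr do rewrite mxE.
have [->|neq_ab] := eqVneq a b.
  by rewrite big1 ?scale1r // => q _; rewrite eqxx.
have [q neq_q] : exists q, a q != b q.
  apply/existsP; apply: contraR neq_ab => /existsPn eq_ab.
  by apply/eqP/ffunP => q; apply/eqP/negPn.
by rewrite (bigD1 q) //= (negbTE neq_q) mul0r scale0r.
Qed.

Lemma tiotaE (p : 'I_n) (X : 'M[CC]_N) :
  tiota A p X = ttensor (fun q => if q == p then X else 1%:M).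
Proof.
apply: tmx_ext => a b; rewrite /ttensor /tiota (bigD1 p) //= eqxx.
case: (pickP (fun q => (q != p) && (a q != b q))) => [q /andP [neq_qp neq_q] | eq_ab].
  have /negbTE -> : ~~ [forall q, (q != p) ==> (a q == b q)].
    by apply/forallPn; exists q; rewrite negb_imply neq_qp.
  by rewrite (bigD1 q) //= (negbTE neq_qp) mxE (negbTE neq_q) mul0r mulr0 scale0r.
have eq_off q : q != p -> a q = b q.
  by move=> neq_qp; move: (eq_ab q); rewrite neq_qp => /negbFE/eqP.
have -> : [forall q, (q != p) ==> (a q == b q)].
  by apply/forallP => q; apply/implyP => /eq_off ->.
by rewrite big1 ?mulr1 // => q neq_qp; rewrite (negbTE neq_qp) mxE eq_off // eqxx.
Qed.

Lemma tperm_op_ttensorC (h : 'M[CC]_N) (s : 'S_n) :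
  tmul (ttensor (fun _ => h)) (tperm_op A s) =
  tmul (tperm_op A s) (ttensor (fun _ => h)).
Proof.
apply: tmx_ext => a b; rewrite /tmul /ttensor /tperm_op.
set b_s := [ffun k => b ((s^-1)%g k)]; set a_s := [ffun k => a (s k)].
rewrite (bigD1 b_s) // [RHS](bigD1 a_s) //= eqxx mulr1.
have -> : a == [ffun k => a_s ((s^-1)%g k)].
  by apply/eqP/ffunP => k; rewrite !ffunE permKV.
rewrite mul1r [X in _ + X]big1 ?addr0; last by move=> k /negbTE ->; rewrite mulr0.
rewrite [X in _ + X]big1 ?addr0; last first.
  move=> k neq_k; case: eqP => [eq_a|]; last by rewrite mul0r.
  by case/eqP: neq_k; apply/ffunP => q; rewrite /a_s ffunE eq_a ffunE permK.
congr (_ *: _); rewrite (reindex_inj (@perm_inj _ s)) /=.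
by apply: eq_bigr => q _; rewrite !ffunE permK.
Qed.

Definition ttrace (M : tm) : A := \sum_a M a a.

Lemma ttrace_ttensorC (H : 'I_n -> 'M[CC]_N) (M : tm) :
  ttrace (tmul (ttensor H) M) = ttrace (tmul M (ttensor H)).
Proof.
rewrite /ttrace /tmul /ttensor exchange_big; apply: eq_bigr => a _.
by apply: eq_bigr => k _; rewrite -scalerAl -scalerAr mul1r mulr1.
Qed.

Lemma ttrace_intertwines (g : 'M[CC]_N) (M' M : tm) :
  g \in unitmx -> intertwines (ttensor (fun _ => g)) M' M -> ttrace M' = ttrace M.
Proof.
move=> g_unit GM.
have GiG : tmul (ttensor (fun _ => invmx g)) (ttensor (fun _ => g)) = t1.
  by rewrite ttensorM mulVmx // ttensor1.
have GGi : tmul (ttensor (fun _ => g)) (ttensor (fun _ => invmx g)) = t1.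
  by rewrite ttensorM mulmxV // ttensor1.
by rewrite -[M']tmul1l -GiG -tmulA GM tmulA -ttrace_ttensorC tmulA GGi tmul1l.
Qed.

End TensorAlgebra.

Section SiteOperators.
Variables (A : algType CC) (N n : nat) (g : 'M[CC]_N).
Local Notation G := (ttensor A (fun _ : 'I_n => g)).

Lemma prod_site1 (phi : 'M[CC]_N -> 'M[CC]_N) (p : 'I_n) X a b :
  phi 1%:M = g ->
  \prod_q phi (if q == p then X else 1%:M) (a q) (b q) =
  phi X (a p) (b p) * \prod_(q | q != p) g (a q) (b q).
Proof.
move=> phi1; rewrite (bigD1 p) //= eqxx; congr (_ * _).
by apply: eq_bigr => q /negbTE ->; rewrite phi1.
Qed.

Lemma prod_site2 (phi : 'M[CC]_N -> 'M[CC]_N) (p q : 'I_n) X Y a b :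
  p != q -> phi 1%:M = g ->
  \prod_r phi ((if r == p then X else 1%:M) *m (if r == q then Y else 1%:M)) (a r) (b r) =
  phi X (a p) (b p) * (phi Y (a q) (b q) * \prod_(r | (r != p) && (r != q)) g (a r) (b r)).
Proof.
move=> neq_pq phi1; have neq_qp : (q == p) = false by rewrite eq_sym (negbTE neq_pq).
rewrite (bigD1 p) // (bigD1 q) 1?eq_sym //= !eqxx neq_qp mulmx1 mul1mx.
congr (_ * (_ * _)).
by apply: eq_bigr => r /andP [/negbTE -> /negbTE ->]; rewrite mulmx1 phi1.
Qed.

Lemma intertwines_site1 (I : finType) (p : 'I_n) (X : I -> 'M[CC]_N) (c' c : I -> A) :
  (forall x y, \sum_i (g *m X i) x y *: c' i = \sum_i (X i *m g) x y *: c i) ->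
  intertwines G (tsum xpredT (fun i a b => tiota A p (X i) a b * c' i))
                (tsum xpredT (fun i a b => tiota A p (X i) a b * c i)).
Proof.
move=> Xg; rewrite /intertwines tmul_sumr tmul_suml; apply: tmx_ext => a b; rewrite /tsum.
under eq_bigr do rewrite tmul_mulr tiotaE ttensorM.
under [RHS]eq_bigr do rewrite tmul_mulr_ttensor tiotaE ttensorM.
rewrite /ttensor.
under eq_bigr do
  rewrite (prod_site1 (phi := mulmx g)) ?mulmx1 // -scalerAl mul1r mulrC -scalerA.
under [RHS]eq_bigr do
  rewrite (prod_site1 (phi := fun M => M *m g)) ?mul1mx // -scalerAl mul1r mulrC -scalerA.
by rewrite -!scaler_sumr Xg.
Qed.

Lemma intertwines_site2 (I : finType) (p q : 'I_n) (e : I -> CC) (X Y : I -> 'M[CC]_N) :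
  p != q ->
  (forall x y x' y', \sum_i e i * ((g *m X i) x y * (g *m Y i) x' y') =
                     \sum_i e i * ((X i *m g) x y * (Y i *m g) x' y')) ->
  intertwines G
    (tsum xpredT (fun i => tscale (e i) (tmul (tiota A p (X i)) (tiota A q (Y i)))))
    (tsum xpredT (fun i => tscale (e i) (tmul (tiota A p (X i)) (tiota A q (Y i))))).
Proof.
move=> neq_pq XYg; rewrite /intertwines tmul_sumr tmul_suml; apply: tmx_ext => a b.
rewrite /tsum.
under eq_bigr do rewrite tmulZr !tiotaE !ttensorM.
under [RHS]eq_bigr do rewrite tmulZl !tiotaE !ttensorM.
rewrite /tscale /ttensor.
under eq_bigr do rewrite (prod_site2 (phi := mulmx g)) ?mulmx1 // scalerA.
under [RHS]eq_bigr do rewrite (prod_site2 (phi := fun M => M *m g)) ?mul1mx // scalerA.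
rewrite -!scaler_suml; congr (_ *: 1).
(* Abstract the common factor so that [under eq_bigr] targets the outer sum. *)
set rest := \prod_(r | _) _.
under eq_bigr do rewrite !mulrA.
under [RHS]eq_bigr do rewrite !mulrA.
rewrite -!mulr_suml; congr (_ * _).
under eq_bigr do rewrite -mulrA.
under [RHS]eq_bigr do rewrite -mulrA.
exact: XYg.
Qed.

End SiteOperators.

Lemma ival_rev_ord (N : nat) (x : 'I_N) : ~~ odd N ->
  ival (rev_ord x) = - ival x /\ ival x != 0.
Proof.
move=> N_even; rewrite /ival (negbTE N_even).
have N_double : N = (N./2 + N./2)%N.
  by rewrite -{1}(odd_double_half N) (negbTE N_even) add0n addnn.
by move: (ltn_ord x) => /=; case: ifP => ?; case: ifP => ?; split; lia.
Qed.

Definition form_sg (kd : gkind) (N : nat) (x : 'I_N) : CC :=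
  match kd with Ortho => 1 | Sympl => (isg x)%:~R end.

Definition form_sym (kd : gkind) : CC := match kd with Ortho => 1 | Sympl => -1 end.

Lemma form_sym_sq kd : form_sym kd * form_sym kd = 1.
Proof. by case: kd; rewrite /= ?mulr1 ?mulrNN ?mulr1. Qed.

Lemma eps_form_sg kd N (i j : 'I_N) : eps kd i j = form_sg kd i * form_sg kd j.
Proof. by case: kd; rewrite /= ?mulr1 ?intrM. Qed.

Lemma JformE kd N (x y : 'I_N) :
  Jform kd N x y = if rev_ord x == y then form_sg kd x else 0.
Proof. by rewrite mxE. Qed.

Lemma rev_ord_eq N (x y : 'I_N) : (rev_ord x == y) = (x == rev_ord y).
Proof. by apply/eqP/eqP => [<-|->]; rewrite rev_ordK. Qed.

Lemma mulmx_delta_mxE N (M : 'M[CC]_N) (i j x y : 'I_N) :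
  (M *m delta_mx i j) x y = if y == j then M x i else 0.
Proof.
rewrite mxE (big_only1 i) // => [|k neq_ki _]; rewrite mxE ?(negbTE neq_ki) ?mulr0 //.
by rewrite eqxx; case: (y == j); rewrite ?mulr1 ?mulr0.
Qed.

Lemma delta_mx_mulmxE N (M : 'M[CC]_N) (i j x y : 'I_N) :
  (delta_mx i j *m M) x y = if x == i then M j y else 0.
Proof.
rewrite mxE (big_only1 j) // => [|k neq_kj _]; rewrite mxE ?(negbTE neq_kj) ?andbF ?mul0r //.
by rewrite eqxx andbT; case: (x == i); rewrite ?mul1r ?mul0r.
Qed.

Lemma mulmx_delta_mulmxE N (M M' : 'M[CC]_N) (i j x y : 'I_N) :
  (M *m delta_mx i j *m M') x y = M x i * M' j y.
Proof.
rewrite mxE (big_only1 j) // => [|k neq_kj _]; rewrite mulmx_delta_mxE ?eqxx //.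
by rewrite (negbTE neq_kj) mul0r.
Qed.

Section Form.
Variables (kd : gkind) (N : nat).
Hypothesis N_even : kd = Sympl -> ~~ odd N.
Local Notation s := (@form_sg kd N).
Local Notation sigma := (form_sym kd).
Local Notation J := (Jform kd N).
Local Notation r := (@rev_ord N).

Lemma form_sg_sq x : s x * s x = 1.
Proof.
case: kd N_even => [|/(_ erefl) /(ival_rev_ord x) [_ x_neq0]] /=; first by rewrite mulr1.
by rewrite -intrM -expr2 /isg sqr_sg x_neq0.
Qed.

Lemma form_sg_rev x : s (r x) = sigma * s x.
Proof.
case: kd N_even => [|/(_ erefl) /(ival_rev_ord x) [rev_x _]] /=; first by rewrite mulr1.
by rewrite /isg rev_x sgrN intrN mulN1r.
Qed.

Lemma form_sg_mul_rev x : s x * s (r x) = sigma.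
Proof. by rewrite form_sg_rev mulrCA form_sg_sq mulr1. Qed.

Lemma mulJmxE (Y : 'M[CC]_N) a b : (J *m Y) a b = s a * Y (r a) b.
Proof.
rewrite mxE (big_only1 (r a)) ?JformE ?eqxx // => i neq_i _.
by rewrite JformE eq_sym (negbTE neq_i) mul0r.
Qed.

Lemma mulmxJE (Y : 'M[CC]_N) a b : (Y *m J) a b = Y a (r b) * s (r b).
Proof.
rewrite mxE (big_only1 (r b)) ?JformE ?rev_ordK ?eqxx // => i neq_i _.
by rewrite JformE rev_ord_eq (negbTE neq_i) mulr0.
Qed.

Lemma mulJJ : J *m J = sigma%:M.
Proof.
apply/matrixP => a b; rewrite mulJmxE JformE rev_ordK mxE.
by case: eqP => _; rewrite ?mulr0 ?mulr1n ?form_sg_mul_rev.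
Qed.

Lemma mulmx_form_trmxE (M : 'M[CC]_N) y y' :
  (M *m J *m M^T) y y' = \sum_j M y j * s j * M y' (r j).
Proof.
rewrite mxE (reindex_inj (@rev_ord_inj N)) /=; apply: eq_bigr => j _.
by rewrite mulmxJE !mxE rev_ordK.
Qed.

Lemma Fmx_in_lie (i j : 'I_N) : in_lie kd (Fmx kd i j).
Proof.
apply/eqP/matrixP => a b.
rewrite [LHS]mxE mulmxJE mulJmxE [in RHS]mxE [(Fmx _ _ _)^T _ _]mxE /Fmx !mxE.
rewrite !(inj_eq (@rev_ord_inj N)) !rev_ord_eq -!mulnb !natrM.
have vanish1 : (b == r i)%:R * (a == j)%:R * (s (r b) - s a * eps kd i j) = 0 :> CC.
  case: (b =P r i) => [->|]; last by rewrite !mul0r.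
  case: (a =P j) => [->|]; last by rewrite mulr0 mul0r.
  by rewrite rev_ordK eps_form_sg [s j * _]mulrCA form_sg_sq !mulr1 subrr mulr0.
have vanish2 : (b == j)%:R * (a == r i)%:R * (s a - eps kd i j * s (r b)) = 0 :> CC.
  case: (b =P j) => [->|]; last by rewrite !mul0r.
  case: (a =P r i) => [->|]; last by rewrite mulr0 mul0r.
  rewrite eps_form_sg -[s i * s j * _]mulrA form_sg_mul_rev form_sg_rev.
  by rewrite [sigma * _]mulrC subrr !mulr0.
by rewrite -[RHS](addr0 0) -{1}vanish1 -vanish2; ring.
Qed.

End Form.

Lemma sum_pair (V : nmodType) (I J : finType) (F : I * J -> V) :
  \sum_ij F ij = \sum_i \sum_j F (i, j).
Proof. by rewrite pair_bigA; apply: eq_bigr => -[]. Qed.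

Lemma sum_scale_FmxE kd N (c : 'I_N * 'I_N -> CC) (a b : 'I_N) :
  (\sum_kl c kl *: Fmx kd kl.1 kl.2) a b =
  c (a, b) - eps kd (rev_ord b) (rev_ord a) * c (rev_ord b, rev_ord a).
Proof.
rewrite summxE; under eq_bigr do rewrite !mxE mulrBr mulrCA.
rewrite sumrB (big_only1 (a, b)) ?(big_only1 (rev_ord b, rev_ord a)) //=.
- by rewrite !rev_ordK !eqxx !mulr1.
- move=> [k l] /= neq_kl _; suff /negbTE -> : ~~ ((a == rev_ord l) && (b == rev_ord k)).
    by rewrite !mulr0.
  by apply: contra neq_kl => /andP [/eqP -> /eqP ->]; rewrite !rev_ordK.
- move=> [k l] /= neq_kl _; suff /negbTE -> : ~~ ((a == k) && (b == l)) by rewrite mulr0.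
  by apply: contra neq_kl => /andP [/eqP <- /eqP <-].
Qed.

Lemma subZmxE N (M1 M2 : 'M[CC]_N) c a b : (M1 - c *: M2) a b = M1 a b - c * M2 a b.
Proof. by rewrite !mxE. Qed.

Section GroupElement.
Variables (kd : gkind) (N : nat).
Hypothesis N_even : kd = Sympl -> ~~ odd N.
Variable g : 'M[CC]_N.
Hypothesis g_G : in_G kd g.
Local Notation s := (@form_sg kd N).
Local Notation sigma := (form_sym kd).
Local Notation J := (Jform kd N).
Local Notation r := (@rev_ord N).

Lemma g_unit : g \in unitmx.
Proof. by case/andP: g_G. Qed.

Lemma invmx_formE : invmx g = sigma *: (J *m g^T *m J).
Proof.
case/andP: g_G => _ /eqP gJg.
have inv_l : sigma *: (J *m g^T *m J) *m g = 1%:M.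
  rewrite -scalemxAl -!mulmxA [g^T *m _]mulmxA gJg (mulJJ N_even).
  by rewrite scale_scalar_mx form_sym_sq.
by rewrite -[invmx g]mul1mx -inv_l -(mulmxA _ g) (mulmxV g_unit) mulmx1.
Qed.

Lemma invmxE a b : invmx g a b = sigma * s a * s (r b) * g (r b) (r a).
Proof. by rewrite invmx_formE mxE mulmxJE mulJmxE mxE; ring. Qed.

Lemma mulmx_form_trmx : g *m J *m g^T = J.
Proof.
have := mulmxV g_unit; rewrite invmx_formE -scalemxAr !mulmxA => /(congr1 (mulmx^~ J)).
by rewrite -scalemxAl -(mulmxA _ J J) (mulJJ N_even) mul1mx mul_mx_scalar scalerA
  form_sym_sq scale1r.
Qed.

Lemma form_sum_cols y y' : \sum_j g j y * s j * g (r j) y' = if r y == y' then s y else 0.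
Proof.
case/andP: g_G => _ /eqP gJg.
have := mulmx_form_trmxE kd g^T y y'; rewrite trmxK gJg JformE => ->.
by apply: eq_bigr => j _; rewrite !mxE.
Qed.

Lemma form_sum_rows x x' : \sum_i g x i * s i * g x' (r i) = if r x == x' then s x else 0.
Proof. by rewrite -mulmx_form_trmxE mulmx_form_trmx JformE. Qed.

Lemma conj_Fmx j i :
  g *m Fmx kd j i *m invmx g = \sum_kl (g kl.1 j * invmx g i kl.2) *: Fmx kd kl.1 kl.2.
Proof.
apply/matrixP => a b; rewrite sum_scale_FmxE /Fmx mulmxBr mulmxBl -scalemxAr -scalemxAl.
rewrite subZmxE !mulmx_delta_mulmxE !invmxE /= !rev_ordK !eps_form_sg.
congr (_ - _); rewrite (form_sg_rev N_even j) (form_sg_rev N_even a).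
pose K := s i * s (r b) * g a (r i) * g (r b) j.
transitivity (s j * s j * (sigma * sigma) * K); first by rewrite /K; ring.
transitivity (s a * s a * (sigma * sigma) * K); last by rewrite /K; ring.
by rewrite !(form_sg_sq N_even).
Qed.

Lemma Q_kernel_commute (x y x' y' : 'I_N) :
  \sum_(ij : 'I_N * 'I_N) eps kd ij.1 ij.2 *
     ((g *m delta_mx ij.1 ij.2) x y * (g *m delta_mx (r ij.1) (r ij.2)) x' y') =
  \sum_(ij : 'I_N * 'I_N) eps kd ij.1 ij.2 *
     ((delta_mx ij.1 ij.2 *m g) x y * (delta_mx (r ij.1) (r ij.2) *m g) x' y').
Proof.
transitivity ((if r x == x' then s x else 0) * (if r y == y' then s y else 0)).
  rewrite sum_pair -(form_sum_rows x x') mulr_suml [r y == y']eq_sym; apply: eq_bigr => i _.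
  rewrite (big_only1 y) //= => [|j neq_jy _]; last first.
    by rewrite mulmx_delta_mxE (ifN_eqC _ _ neq_jy) mul0r mulr0.
  rewrite !mulmx_delta_mxE eqxx eps_form_sg.
  by case: (y' == r y) => /=; [ring | rewrite !(mulr0, mul0r)].
rewrite sum_pair (big_only1 x) //= => [|i neq_ix _]; last first.
  by apply: big1 => j _; rewrite delta_mx_mulmxE (ifN_eqC _ _ neq_ix) mul0r mulr0.
rewrite -(form_sum_cols y y') mulr_sumr [r x == x']eq_sym; apply: eq_bigr => j _.
rewrite !delta_mx_mulmxE eqxx eps_form_sg.
by case: (x' == r x) => /=; [ring | rewrite !(mulr0, mul0r)].
Qed.

End GroupElement.

Lemma in_lie0 kd N : in_lie kd (0 : 'M[CC]_N).
Proof. by rewrite /in_lie trmx0 mul0mx mulmx0 addr0. Qed.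

Lemma in_lieZD kd N c (X Y : 'M[CC]_N) :
  in_lie kd X -> in_lie kd Y -> in_lie kd (c *: X + Y).
Proof.
rewrite /in_lie => /eqP X_lie /eqP Y_lie.
rewrite linearD linearZ /= mulmxDl mulmxDr -scalemxAl -scalemxAr addrACA -scalerDr.
by rewrite X_lie Y_lie scaler0 addr0.
Qed.

Section LieHom.
Variables (kd : gkind) (N : nat) (A : algType CC) (rho : 'M[CC]_N -> A).
Hypothesis rho_hom : is_lie_hom kd rho.

Lemma lie_hom0 : rho 0 = 0.
Proof.
have := rho_hom.1 1 0 0 (in_lie0 kd N) (in_lie0 kd N).
rewrite scaler0 addr0 scale1r => /(congr1 (fun v => v - rho 0)).
by rewrite subrr addrK => /esym.
Qed.

Lemma lie_hom_sum (I : finType) (c : I -> CC) (X : I -> 'M[CC]_N) :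
  (forall i, in_lie kd (X i)) -> rho (\sum_i c i *: X i) = \sum_i c i *: rho (X i).
Proof.
move=> X_lie; pose P M y := in_lie kd M /\ rho M = y.
suff [] : P (\sum_i c i *: X i) (\sum_i c i *: rho (X i)) by [].
apply: (big_rec2 P); first by split; [exact: in_lie0 | exact: lie_hom0].
move=> i M _ _ [M_lie <-]; split; first exact: in_lieZD.
exact: rho_hom.1.
Qed.

End LieHom.

Section Intertwining.
Variables (kd : gkind) (N n : nat).
Hypothesis N_even : kd = Sympl -> ~~ odd N.
Variable g : 'M[CC]_N.
Hypothesis g_G : in_G kd g.
Variables (A : algType CC) (rho : 'M[CC]_N -> A).
Hypothesis rho_hom : is_lie_hom kd rho.
Local Notation G := (ttensor A (fun _ : 'I_n => g)).

Lemma F_kernel_intertwine (x y : 'I_N) :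
  \sum_(ij : 'I_N * 'I_N) (g *m delta_mx ij.1 ij.2) x y *: rho (Adj g (Fmx kd ij.2 ij.1)) =
  \sum_(ij : 'I_N * 'I_N) (delta_mx ij.1 ij.2 *m g) x y *: rho (Fmx kd ij.2 ij.1).
Proof.
transitivity (\sum_k g k y *: rho (Fmx kd k x)); last first.
  rewrite sum_pair [RHS](big_only1 x) //= => [|i neq_ix _]; last first.
    by apply: big1 => j _; rewrite delta_mx_mulmxE (ifN_eqC _ _ neq_ix) scale0r.
  by apply: eq_bigr => j _; rewrite delta_mx_mulmxE eqxx.
have g_invmx l : \sum_i g x i * invmx g i l = (x == l)%:R.
  by have := congr1 (fun M : 'M[CC]_N => M x l) (mulmxV (g_unit g_G)); rewrite !mxE.
rewrite sum_pair; under eq_bigr => i _.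
  rewrite (big_only1 y) //= => [|j neq_jy _]; last first.
    by rewrite mulmx_delta_mxE (ifN_eqC _ _ neq_jy) scale0r.
  rewrite mulmx_delta_mxE eqxx /Adj (conj_Fmx N_even g_G).
  rewrite (lie_hom_sum rho_hom _ (fun kl => Fmx_in_lie N_even kl.1 kl.2)) scaler_sumr.
  over.
rewrite exchange_big sum_pair; apply: eq_bigr => k _.
have contract l : \sum_i g x i *: ((g k y * invmx g i l) *: rho (Fmx kd k l)) =
    ((x == l)%:R * g k y) *: rho (Fmx kd k l).
  rewrite -g_invmx mulr_suml scaler_suml; apply: eq_bigr => i _.
  by rewrite scalerA; congr (_ *: _); ring.
under eq_bigr do rewrite contract.
rewrite (big_only1 x) //= => [|l neq_lx _]; first by rewrite eqxx mul1r.
by rewrite eq_sym (negbTE neq_lx) mul0r scale0r.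
Qed.

Lemma intertwines_tF u (p : 'I_n) :
  intertwines G (tF kd (fun X => rho (Adj g X)) u p) (tF kd rho u p).
Proof.
apply: intertwinesD; first exact/intertwinesZ/intertwines1.
by apply: intertwines_site1 => x y; apply: F_kernel_intertwine.
Qed.

Lemma intertwines_tQ (p q : 'I_n) : p != q -> intertwines G (tQ A kd p q) (tQ A kd p q).
Proof.
move=> neq_pq; apply: intertwines_site2 => // x y x' y'.
exact: (Q_kernel_commute N_even g_G).
Qed.

Lemma intertwines_YT (T : 'I_n -> nat * nat) : intertwines G (YT A T) (YT A T).
Proof.
apply: intertwines_big => p _; apply: intertwines_big => c _.
apply/intertwinesZ/intertwinesD; last exact/intertwinesZ/intertwines1.
by apply: intertwines_sum => q _; apply: tperm_op_ttensorC.
Qed.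

Lemma intertwines_FT (T : 'I_n -> nat * nat) u :
  intertwines G (FT kd (fun X => rho (Adj g X)) T u) (FT kd rho T u).
Proof.
apply: intertwinesM; first exact: intertwines_YT.
apply: intertwines_big => p _; apply: intertwinesM; last exact: intertwines_tF.
apply/intertwinesD/intertwinesZ; first exact: intertwines1.
by apply: intertwines_sum => q lt_qp; apply: intertwines_tQ; rewrite neq_ltn lt_qp.
Qed.

End Intertwining.

Theorem proposition2p5 (kd : gkind) (N n : nat) (nu : seq nat)
    (T : 'I_n -> nat * nat) :
  (kd = Sympl -> ~~ odd N) ->
  is_partition n nu -> (size nu <= N)%N -> is_std_tableau nu T ->
  forall (A : algType CC) (rho : 'M[CC]_N -> A), is_lie_hom kd rho ->
  forall g : 'M[CC]_N, in_G kd g ->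
  forall u : CC, (forall p : 'I_n, 2%:R * u + (content T p)%:~R != 0) ->
    Zeval kd rho T u = Zeval kd (fun X => rho (Adj g X)) T u.
Proof.
move=> N_even _ _ _ A rho rho_hom g g_G u _.
symmetry; apply: (ttrace_intertwines (g_unit g_G)).
exact: intertwines_FT.
Qed.
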